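(* The target counital subalgebra of the quantum groupoid $H_\mathcal{C}$ is $$H_t(H_\mathcal{C})=\mathrm{span}_a\Big\{\sum_{k,b}\frac{\sqrt{d_k}}{\sqrt{d_a}}\,e^{ab}_{k;ab}\Big\},$$ where $a$ ranges over $Irr(\mathcal{C})$, and the inner sum is over $k,b\in Irr(\mathcal{C})$ with $(a,k,b)$ admissible. Moreover $\dim_\mathbb{C}H_t(H_\mathcal{C})=\dim_\mathbb{C}V_{\mathbf{1}}$, so $H_t(H_\mathcal{C})\cong V_{\mathbf{1}}$ as $H_\mathcal{C}$-modules. In particular the tensor unit $H_t(H_\mathcal{C})$ of $Rep(H_\mathcal{C})$ is simple.
   Context: Let $\mathcal{C}$ be a unitary fusion category that is multiplicity-free, whose simple objects are self-dual, and whose Frobenius–Schur indicators are trivial. Choose its $F$-matrices to be unitary, and normalize theta symbols as $\theta(a,b,c)=\sqrt{d_ad_bd_c}$, where $d_a$ is the quantum dimension of $a$ and $Irr(\mathcal{C})$ is the set of simple objects. The Kitaev–Kong $C^*$-quantum groupoid (weak Hopf algebra) is $$H_\mathcal{C}=\bigoplus_{a,b,c,d,i\in Irr(\mathcal{C})}Hom(b,a\otimes i)\otimes Hom(i\otimes d,c).$$ It has basis vectors $e^{ab}_{i;cd}$, pictured as an ''H''-shaped graph: left vertical edge labelled $a$ on top and $b$ on the bottom, right vertical edge labelled $c$ on top and $d$ on the bottom, and horizontal rung labelled $i$. The structure maps are as follows. - Multiplication: $e^{ab}_{i;cd}\,e^{a'b'}_{i';c'd'}=\frac{\delta_{c,a'}\delta_{d,b'}\delta_{i,i'}}{\sqrt{d_i}}\,e^{ab}_{i;c'd'}$.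 - Unit: $\eta=\sum_{a,b,i}\sqrt{d_i}\,e^{ab}_{i;ab}$. - Counit: $\varepsilon(e^{ab}_{i;cd})=\delta_{a,b}\delta_{c,d}\delta_{i,\mathbf{1}}$. - Comultiplication: $$\Delta(e^{ab}_{i;cd})=\sum_{j,k,p,q}\frac{\sqrt{d_jd_k}}{\sqrt{d_i}}F^{ajk}_{b;ip}F^{dkj}_{c;iq}\;e^{ap}_{j;cq}\otimes e^{pb}_{k;qd},$$ where $j,k$ range over labels admissible with $i$. - Antipode: $S(e^{ab}_{i;cd})=\frac{\sqrt{d_bd_c}}{\sqrt{d_ad_d}}e^{dc}_{i;ba}$. - Star: $(e^{ab}_{i;cd})^*=e^{cd}_{i;ab}$. The target counital map is $\varepsilon_t(h)=\varepsilon(\eta_{(1)}h)\eta_{(2)}$ (Sweedler notation $\Delta(\eta)=\eta_{(1)}\otimes\eta_{(2)}$). The target counital subalgebra is $H_t=\varepsilon_t(H_\mathcal{C})$. It is the tensor unit of $Rep(H_\mathcal{C})$, with action $h\cdot z=\varepsilon_t(hz)$. For $i\in Irr(\mathcal{C})$, let $V_i=\mathrm{span}\{v^{ab}_i : (i,a,b)\text{ admissible}\}$, where $v^{ab}_i$ is a trivalent vertex with legs labelled $a,b,i$. Its $H_\mathcal{C}$-module structure is $e^{ab}_{j;cd}\cdot v^{pq}_i=\frac{\delta_{i,j}\delta_{c,p}\delta_{d,q}}{\sqrt{d_i}}v^{ab}_i$. The $V_i$ are the simple $H_\mathcal{C}$-modules. *)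

From HB Require Import structures.
From mathcomp Require Import all_boot all_order all_algebra.
Set Implicit Arguments. Unset Strict Implicit. Unset Printing Implicit Defensive.
Import Order.TTheory GRing.Theory Num.Theory.
Local Open Scope ring_scope.

(* Skeletal data of a multiplicity-free fusion category with self-dual simples,
   over a numeric algebraically closed field C (e.g. the complex numbers).
   F^{abc}_{d;ef} is written  F a b c d e f : it is the matrix coefficient of the
   F-move between the fusion trees ((a b)_f c)_d and (a (b c)_e)_d; it is only
   meaningful when N b c e, N a e d, N a b f, N f c d hold. *)
Record fusion_data (C : numClosedFieldType) := FusionData {
  lab : finType;                          (* Irr(C) *)
  lone : lab;
  N : lab -> lab -> lab -> bool;          (* N a b c : (a,b,c) admissible *)
  qd : lab -> C;
  F : lab -> lab -> lab -> lab -> lab -> lab -> C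
}.

Section UFC.
Variable C : numClosedFieldType.
Variable D : fusion_data C.
Local Notation L := (@lab C D).
Local Notation N := (@N C D).
Local Notation d := (@qd C D).
Local Notation F := (@F C D).
Local Notation one := (@lone C D).

(* Axioms of a unitary, multiplicity-free fusion category whose simples are
   self-dual with trivial Frobenius-Schur indicators, with unitary F-matrices and
   theta symbols normalised as theta(a,b,c) = sqrt(d_a d_b d_c). *)
Record UFC_axioms : Prop := {
  (* fusion rules: unit, self-duality (full symmetry of N), associativity *)
  N_unit : forall a b, N one a b = (a == b);
  N_sym12 : forall a b c, N a b c = N b a c;
  N_sym23 : forall a b c, N a b c = N a c b;
  N_assoc : forall a b c x,
    (\sum_(e | N a b e && N e c x) 1 = \sum_(f | N b c f && N a f x) 1)%N;
  qd_pos : forall a, 0 < d a;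
  qd_one : d one = 1;
  qd_fusion : forall a b, d a * d b = \sum_c (N a b c)%:R * d c;
  F_pentagon : forall a b c dd x f g h k,
    N a b f -> N f c g -> N g dd x -> N c dd h -> N b h k -> N a k x ->
    F f c dd x h g * F a b h x k f =
    \sum_(l | [&& N b c l, N a l g & N l dd k])
       F a b c g l f * F a l dd x k g * F b c dd k h l;
  F_unitary_rows : forall a b c dd e e',
    N b c e -> N a e dd -> N b c e' -> N a e' dd ->
    \sum_(f | N a b f && N f c dd) F a b c dd e f * (F a b c dd e' f)^* = (e == e')%:R;
  F_unitary_cols : forall a b c dd f f',
    N a b f -> N f c dd -> N a b f' -> N f' c dd ->
    \sum_(e | N b c e && N a e dd) F a b c dd e f * (F a b c dd e f')^* = (f == f')%:R;
  F_one1 : forall b c dd, N b c dd -> F one b c dd dd b = 1;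
  F_one2 : forall a c dd, N a c dd -> F a one c dd c a = 1;
  F_one3 : forall a b dd, N a b dd -> F a b one dd b dd = 1;
  (* F-symbols with a trivial internal channel (consequence of trivial FS
     indicators and theta(a,b,c) = sqrt(d_a d_b d_c)) *)
  F_vac1 : forall x y v, N x y v ->
    F x y y x one v = sqrtC (d v) / (sqrtC (d x) * sqrtC (d y));
  F_vac2 : forall x z u, N x z u ->
    F x x z z u one = sqrtC (d u) / (sqrtC (d x) * sqrtC (d z))
}.

(* basis vector e^{ab}_{i;cd} is indexed by the tuple (a,b,i,c,d) with
   Hom(b, a (x) i) and Hom(i (x) d, c) nonzero *)
Local Notation tup5 := (L * L * L * L * L)%type.
Definition adm5 (t : tup5) : bool :=
  let: (a, b, i, c, dd) := t in N a i b && N i dd c.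
Definition Hbasis : finType := {t : tup5 | adm5 t}.
Definition HC := {ffun Hbasis -> C^o}.

Definition ebas (β : Hbasis) : HC := [ffun γ => (γ == β)%:R].

Definition mulB (β β' : Hbasis) : HC :=
  let: (a, b, i, c, dd) := val β in
  let: (a', b', i', c', d') := val β' in
  if [&& c == a', dd == b' & i == i'] then
    [ffun γ : Hbasis => (val γ == (a, b, i, c', d'))%:R / sqrtC (d i)]
  else 0.
Definition mulH (x y : HC) : HC :=
  \sum_(β : Hbasis) \sum_(β' : Hbasis) (x β * y β') *: mulB β β'.

Definition etaH : HC :=
  [ffun β : Hbasis => let: (a, b, i, c, dd) := val β in
     if (c == a) && (dd == b) then sqrtC (d i) else 0].

Definition epsB (β : Hbasis) : C :=
  let: (a, b, i, c, dd) := val β in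
  ((a == b) && (c == dd) && (i == one))%:R.
Definition epsH (x : HC) : C := \sum_(β : Hbasis) x β * epsB β.

(* comultiplication, an element of HC (x) HC written in the basis
   e_g1 (x) e_g2, i.e. as a coefficient function on pairs of basis vectors *)
Definition DeltaB (β : Hbasis) : {ffun Hbasis * Hbasis -> C} :=
  [ffun g : Hbasis * Hbasis =>
    let: (a, b, i, c, dd) := val β in
    let: (a1, p, j, c1, q) := val g.1 in
    let: (p2, b2, k, q2, d2) := val g.2 in
    if [&& a1 == a, c1 == c, p2 == p, q2 == q, b2 == b, d2 == dd & N j k i] then
      sqrtC (d j) * sqrtC (d k) / sqrtC (d i) * F a j k b i p * F dd k j c i q
    else 0].
Definition DeltaH (x : HC) : {ffun Hbasis * Hbasis -> C} :=
  [ffun g => \sum_(β : Hbasis) x β * DeltaB β g].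

Definition eps_t (h : HC) : HC :=
  \sum_(g : Hbasis * Hbasis)
     (DeltaH etaH g * epsH (mulH (ebas g.1) h)) *: ebas g.2.

Definition Ht : {vspace HC} := <<[seq eps_t (ebas β) | β <- enum Hbasis]>>%VS.

(* H_C-action on H_t (tensor unit of Rep(H_C)) *)
Definition act_t (h z : HC) : HC := eps_t (mulH h z).

Definition wvec (a : L) : HC :=
  [ffun β : Hbasis => let: (a', b, k, c, dd) := val β in
     if [&& a' == a, c == a & dd == b] then sqrtC (d k) / sqrtC (d a) else 0].

Definition Vbasis (i : L) : finType := {p : L * L | N i p.1 p.2}.
Definition Vmod (i : L) := {ffun Vbasis i -> C^o}.

Definition actB (i : L) (β : Hbasis) (γ : Vbasis i) : Vmod i :=
  let: (a, b, j, c, dd) := val β in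
  let: (p, q) := val γ in
  if [&& j == i, c == p & dd == q] then
    [ffun δ : Vbasis i => (val δ == (a, b))%:R / sqrtC (d i)]
  else 0.
Definition actV (i : L) (x : HC) (v : Vmod i) : Vmod i :=
  \sum_(β : Hbasis) \sum_(γ : Vbasis i) (x β * v γ) *: actB β γ.

End UFC.

Arguments wvec {C} D a.
Arguments Vmod {C} D i.
Arguments act_t {C} D h z.
Arguments actV {C} D i x v.

(* The counit pairs a basis vector e^{ab}_{i;cd} only with the unit-rung vectors
   e^{aa}_{1;cc}, and these multiply like matrix units.  Writing ucoef_a(h) for the
   sum of the coefficients of h at the vectors e^{aa}_{1;cc}, this gives
   eps(e^{ab}_{i;cd} h) = eps(e^{ab}_{i;cd}) ucoef_c(h).  In eps_t only the terms of
   Delta(eta) with a unit-rung first factor survive; as the F-symbols with a trivial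
   leg are 1, they are the e^{aa}_{1;cc} (x) e^{ab}_{k;cb}, and one finds
   eps_t(h) = sum_a sqrt(d_a) ucoef_a(h) w_a, where w_a is the vector of the
   statement and ucoef_x(w_a) = delta_{xa}/sqrt(d_a).  So eps_t is a projection onto
   span{w_a}, and h |-> (ucoef_a h)_a, which is invariant under eps_t and turns left
   multiplication into the action on V_1 = span{v^{aa}_1}, restricts to an
   isomorphism H_t ~ V_1.  Simplicity: e^{xx}_{1;aa} maps any z in H_t with
   ucoef_a(z) <> 0 to a nonzero multiple of w_x. *)

From HB Require Import structures.
From mathcomp Require Import all_boot all_order all_algebra.
From mathcomp Require Import ring.
Import GRing.Theory Num.Theory.
Local Open Scope ring_scope.
Set Implicit Arguments. Unset Strict Implicit. Unset Printing Implicit Defensive.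

Lemma sum_delta (I : finType) (R : pzSemiRingType) (i : I) (F : I -> R) :
  \sum_j (j == i)%:R * F j = F i.
Proof.
by rewrite (bigD1 i) //= eqxx mul1r big1 ?addr0 // => j /negPf->; rewrite mul0r.
Qed.

Section QuantumGroupoid.
Variables (C : numClosedFieldType) (D : fusion_data C).
Local Notation L := (lab D).
Local Notation one := (lone D).
Local Notation N := (@N C D).
Local Notation d := (@qd C D).
Local Notation HB := (Hbasis D).

Lemma regular_scaleE (k x : C^o) : k *: x = k * x.
Proof. by []. Qed.

(* For β = e^{ab}_{i;cd}, ltop β = a and rtop β = c. *)
Definition ltop (β : HB) : L := (val β).1.1.1.1.
Definition rtop (β : HB) : L := (val β).1.2.

(* By ucoef_ubas, ucoef a h = \sum_c h (ubas a c); the definition via epsB does not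
   need the axioms. *)
Definition ucoef (a : L) (h : HC D) : C := \sum_(β | ltop β == a) epsB β * h β.

Lemma ucoef_is_scalar a : scalar (ucoef a).
Proof.
move=> k h h'; rewrite /ucoef mulr_sumr -big_split; apply: eq_bigr => β _.
by rewrite !ffunE mulrDr mulrCA.
Qed.

Lemma ucoefZ a k h : ucoef a (k *: h) = k * ucoef a h.
Proof. by rewrite /ucoef mulr_sumr; apply: eq_bigr => β _; rewrite ffunE mulrCA. Qed.

Lemma ucoef_sum a I (r : seq I) (P : pred I) (F : I -> HC D) :
  ucoef a (\sum_(i <- r | P i) F i) = \sum_(i <- r | P i) ucoef a (F i).
Proof.
rewrite /ucoef; under eq_bigr do rewrite sum_ffunE mulr_sumr.
exact: exchange_big.
Qed.

Definition toV1 (h : HC D) : Vmod D one := [ffun γ => ucoef (val γ).1 h].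

Lemma toV1_is_linear : linear toV1.
Proof. by move=> k h h'; apply/ffunP => γ; rewrite !ffunE ucoef_is_scalar. Qed.

HB.instance Definition _ :=
  GRing.isLinear.Build C (HC D) (Vmod D one) _ toV1 toV1_is_linear.

Lemma mulH_is_linear (h : HC D) : linear (mulH h).
Proof.
move=> k x y; rewrite /mulH scaler_sumr -big_split; apply: eq_bigr => β _ /=.
rewrite scaler_sumr -big_split; apply: eq_bigr => β' _ /=.
by rewrite !ffunE regular_scaleE scalerA -scalerDl mulrDr mulrCA.
Qed.

Lemma epsH_is_scalar : scalar (@epsH C D).
Proof.
move=> k x y; rewrite /epsH mulr_sumr -big_split; apply: eq_bigr => β _ /=.
by rewrite !ffunE regular_scaleE mulrDl mulrA.
Qed.

Lemma eps_t_is_linear : linear (@eps_t C D).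
Proof.
move=> k x y; rewrite /eps_t scaler_sumr -big_split; apply: eq_bigr => g _ /=.
by rewrite scalerA -scalerDl mulH_is_linear epsH_is_scalar mulrDr mulrCA.
Qed.

HB.instance Definition _ :=
  GRing.isLinear.Build C (HC D) (HC D) _ (@eps_t C D) eps_t_is_linear.

Hypothesis HD : UFC_axioms D.

Lemma sqrt_qd_neq0 a : sqrtC (d a) != 0.
Proof. by rewrite sqrtC_eq0 lt0r_neq0 ?qd_pos. Qed.

Lemma N_unitr a b : N a one b = (a == b).
Proof. by rewrite N_sym12 // N_unit. Qed.

Lemma adm5_ubas a c : adm5 (a, a, one, c, c).
Proof. by rewrite /adm5 N_unitr N_unit // !eqxx. Qed.

Definition ubas a c : HB := exist _ (a, a, one, c, c) (adm5_ubas a c).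

Lemma epsB_ubas a c : epsB (ubas a c) = 1.
Proof. by rewrite /epsB /= !eqxx. Qed.

Lemma epsB_eq_ubas β : epsB β = (β == ubas (ltop β) (rtop β))%:R.
Proof.
case: β => [[[[[a b] i] c] dd] /= adm]; rewrite /epsB /ltop /rtop -val_eqE /=.
rewrite !xpair_eqE; case: (eqVneq i one) adm => [->|_ _]; last by rewrite !(andbF, andFb).
by rewrite /adm5 N_unitr N_unit // => /andP[/eqP-> /eqP->]; rewrite !eqxx.
Qed.

Lemma epsB_sum_ubas β : epsB β = \sum_a \sum_c (β == ubas a c)%:R.
Proof.
rewrite epsB_eq_ubas (big_only1 (ltop β)) // => [|a ne _].
  rewrite (big_only1 (rtop β)) // => c ne _.
  by case: eqP => // eq; rewrite eq /rtop eqxx in ne.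
apply: big1 => c _; case: eqP => // eq.
by rewrite eq /ltop eqxx in ne.
Qed.

Lemma sum_epsB (F : HB -> C) : \sum_β epsB β * F β = \sum_a \sum_c F (ubas a c).
Proof.
transitivity (\sum_β \sum_a \sum_c (β == ubas a c)%:R * F β).
  apply: eq_bigr => β _; rewrite epsB_sum_ubas mulr_suml.
  by under eq_bigr do rewrite mulr_suml.
rewrite exchange_big; apply: eq_bigr => a _; rewrite exchange_big.
by apply: eq_bigr => c _; rewrite sum_delta.
Qed.

Lemma ucoef_ubas a h : ucoef a h = \sum_c h (ubas a c).
Proof.
rewrite /ucoef big_mkcond.
transitivity (\sum_β epsB β * ((ltop β == a)%:R * h β)).
  by apply: eq_bigr => β _; case: eqP; rewrite ?mul1r ?mul0r ?mulr0.
rewrite sum_epsB.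
transitivity (\sum_x (x == a)%:R * \sum_c h (ubas x c)); last exact: sum_delta.
by apply: eq_bigr => x _; rewrite mulr_sumr.
Qed.

Lemma ucoef_ebas x β : ucoef x (ebas β) = (ltop β == x)%:R * epsB β.
Proof.
rewrite /ucoef big_mkcond.
transitivity (\sum_β' (β' == β)%:R * ((ltop β' == x)%:R * epsB β')); last exact: sum_delta.
apply: eq_bigr => β' _; rewrite ffunE.
by case: (ltop β' == x); rewrite ?mul1r ?mul0r ?mulr0 // mulrC.
Qed.

Lemma epsH_ucoef x : epsH x = \sum_a ucoef a x.
Proof.
rewrite /epsH; under eq_bigr do rewrite mulrC.
by rewrite sum_epsB; apply: eq_bigr => a _; rewrite ucoef_ubas.
Qed.

(* Unit-rung vectors multiply like matrix units; a product involving any other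
   basis vector has no unit-rung component. *)
Lemma ucoef_mulB y β β' :
  ucoef y (mulB β β') = (ltop β == y)%:R * epsB β * epsB β' * (ltop β' == rtop β)%:R.
Proof.
rewrite ucoef_ubas.
case: β => [[[[[a b] i] c] dd] adm]; case: β' => [[[[[a' b'] i'] c'] d'] adm'].
rewrite /mulB /epsB /ltop /rtop /=.
case: ifP => [/and3P[/eqP<- /eqP<- /eqP<-] | ncond].
  under eq_bigr => c0 _ do rewrite ffunE /= !xpair_eqE.
  case: (eqVneq i one) adm => [->|_ _]; last first.
    rewrite big1 => [|c0 _]; last by rewrite !andbF !andFb mul0r.
    by rewrite !andbF !(mulr0, mul0r).
  rewrite /adm5 N_unitr N_unit // => /andP[/eqP<- /eqP->].
  rewrite qd_one // sqrtC1 !eqxx !andbT !mulr1.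
  under eq_bigr => c0 _ do rewrite divr1 andbb.
  rewrite (big_only1 c') // => [|c0 ne _].
    by rewrite eqxx andbT [a == y]eq_sym; case: (y == a); rewrite ?mul1r ?mul0r.
  by rewrite (negPf ne) andbF andFb.
rewrite big1 => [|c0 _]; last by rewrite ffunE.
case: (eqVneq i one) adm ncond => [->|_ _ _]; last by rewrite !(andbF, mulr0, mul0r).
case: (eqVneq i' one) adm' => [->|_ _]; last by rewrite !(andbF, mulr0, mul0r).
rewrite /adm5 !N_unitr !N_unit // => /andP[/eqP<- /eqP->] /andP[/eqP<- /eqP->].
by case: (eqVneq a' c) => [->|]; rewrite ?eqxx // mulr0.
Qed.

Lemma ucoef_mulH y h z :
  ucoef y (mulH h z) = \sum_(β | ltop β == y) epsB β * h β * ucoef (rtop β) z.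
Proof.
rewrite /mulH ucoef_sum [RHS]big_mkcond; apply: eq_bigr => β _.
rewrite ucoef_sum; under eq_bigr => β' _ do rewrite ucoefZ ucoef_mulB.
case: eqP => _; last by apply: big1 => β' _; rewrite mul0r !mul0r mulr0.
rewrite /ucoef [in RHS]big_mkcond [in RHS]mulr_sumr; apply: eq_bigr => β' _.
by case: eqP => _; rewrite ?mulr0 ?mulr1 ?mul1r //; ring.
Qed.

Lemma ucoef_mul_ebas y β z :
  ucoef y (mulH (ebas β) z) = (ltop β == y)%:R * epsB β * ucoef (rtop β) z.
Proof.
rewrite ucoef_mulH big_mkcond.
transitivity (\sum_β' (β' == β)%:R * ((ltop β' == y)%:R * epsB β' * ucoef (rtop β') z));
  last exact: sum_delta.
apply: eq_bigr => β' _; rewrite ffunE.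
by case: (ltop β' == y); rewrite ?mul1r ?mul0r ?mulr0 //; ring.
Qed.

Lemma epsH_mul_ebas β h : epsH (mulH (ebas β) h) = epsB β * ucoef (rtop β) h.
Proof.
rewrite epsH_ucoef; under eq_bigr do rewrite ucoef_mul_ebas eq_sym -mulrA.
exact: sum_delta.
Qed.

(* The fusion rule N 1 k i forces k = i, and the F-symbols with a trivial leg are 1. *)
Lemma DeltaB_ubas β a c γ :
  DeltaB β (ubas a c, γ) = [&& ltop β == a, rtop β == c & γ == β]%:R.
Proof.
case: β => [[[[[x y] i] u] v] adm]; case: γ => [[[[[p b] k] q] w] admγ].
rewrite /DeltaB ffunE /ltop /rtop -val_eqE /= N_unit //.
move: adm; case: ifP => [|ncond _].
  case/and5P=> /eqP<- /eqP<- /eqP-> /eqP-> /and3P[/eqP-> /eqP-> /eqP->].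
  case/andP=> Naiy Nivc; rewrite !eqxx qd_one // sqrtC1 mul1r.
  rewrite divff ?sqrt_qd_neq0 // F_one2 // F_one3 ?mulr1 //.
  by rewrite N_sym12.
suff -> : [&& x == a, u == c & (p, b, k, q, w) == (x, y, i, u, v)] = false by [].
apply: contraFF ncond => /and3P[/eqP-> /eqP-> /eqP[-> -> -> -> ->]].
by rewrite !eqxx.
Qed.

Lemma DeltaH_eta_ubas a c γ :
  DeltaH (etaH D) (ubas a c, γ) = (a == ltop γ)%:R * (c == rtop γ)%:R * etaH D γ.
Proof.
rewrite ffunE; under eq_bigr do rewrite DeltaB_ubas.
transitivity (\sum_β (β == γ)%:R * ((a == ltop β)%:R * (c == rtop β)%:R * etaH D β));
  last exact: sum_delta.
apply: eq_bigr => β _; rewrite [γ == β]eq_sym [a == _]eq_sym [c == _]eq_sym.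
case: (eqVneq β γ) => _; rewrite ?andbT ?andbF ?mul1r ?mul0r ?mulr0 // mulrC.
by case: (ltop β == a); case: (rtop β == c); rewrite ?mul1r ?mul0r.
Qed.

Lemma etaH_rtop γ : etaH D γ = (rtop γ == ltop γ)%:R * etaH D γ.
Proof.
case: γ => [[[[[a b] i] c] dd] adm]; rewrite /rtop /ltop ffunE /=.
by case: eqP => _; rewrite ?mul1r ?mul0r.
Qed.

Lemma eps_t_ffunE (h : HC D) γ :
  eps_t h γ = \sum_g DeltaH (etaH D) (g, γ) * epsH (mulH (ebas g) h).
Proof.
rewrite /eps_t sum_ffunE.
transitivity (\sum_g \sum_(g2 : HB)
  ((DeltaH (etaH D) (g, g2) * epsH (mulH (ebas g) h)) *: ebas g2) γ).
  by rewrite pair_bigA; apply: eq_bigr; case.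
apply: eq_bigr => g _.
transitivity (\sum_(g2 : HB) (g2 == γ)%:R * (DeltaH (etaH D) (g, g2) * epsH (mulH (ebas g) h)));
  last exact: sum_delta.
by apply: eq_bigr => g2 _; rewrite !ffunE eq_sym; apply: mulrC.
Qed.

Lemma eps_tE h : eps_t h = [ffun γ => etaH D γ * ucoef (ltop γ) h].
Proof.
apply/ffunP => γ; rewrite eps_t_ffunE ffunE.
transitivity (\sum_g epsB g * (DeltaH (etaH D) (g, γ) * ucoef (rtop g) h)).
  by apply: eq_bigr => g _; rewrite epsH_mul_ebas mulrCA.
rewrite sum_epsB.
under eq_bigr => a _ do under eq_bigr => c _ do rewrite DeltaH_eta_ubas -!mulrA.
under eq_bigr => a _ do rewrite -mulr_sumr sum_delta.
by rewrite sum_delta etaH_rtop; case: eqP => [->|_]; rewrite ?mul0r.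
Qed.

Lemma wvecE a γ : wvec D a γ = (ltop γ == a)%:R * etaH D γ / sqrtC (d a).
Proof.
case: γ => [[[[[a' b] k] c] dd] adm]; rewrite /ltop !ffunE /=.
case: (eqVneq a' a) => [->|_]; last by rewrite !mul0r.
by rewrite andTb; case: ifP; rewrite mulr1n ?mul1r ?mul0r.
Qed.

Lemma ucoef_wvec x a : ucoef x (wvec D a) = (x == a)%:R / sqrtC (d a).
Proof.
rewrite ucoef_ubas.
transitivity (\sum_c (c == x)%:R * ((x == a)%:R / sqrtC (d a))); last exact: sum_delta.
apply: eq_bigr => c _; rewrite wvecE /ltop ffunE /= qd_one // sqrtC1.
by rewrite andbb; case: (c == x); rewrite ?mulr1 ?mulr0 ?mul1r ?mul0r.
Qed.

Lemma eps_t_span h : eps_t h = \sum_a (sqrtC (d a) * ucoef a h) *: wvec D a.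
Proof.
apply/ffunP => γ; rewrite eps_tE sum_ffunE ffunE.
transitivity (\sum_a (a == ltop γ)%:R * (etaH D γ * ucoef a h)); first by rewrite sum_delta.
apply: eq_bigr => a _; rewrite [in RHS]ffunE regular_scaleE wvecE eq_sym.
case: (ltop γ == a); rewrite ?mul0r ?mulr0 // !mul1r.
by rewrite [RHS]mulrC mulrA divfK ?sqrt_qd_neq0.
Qed.

Lemma ucoef_eps_t a h : ucoef a (eps_t h) = ucoef a h.
Proof.
rewrite eps_t_span ucoef_sum.
transitivity (\sum_x (x == a)%:R * ucoef x h); last exact: sum_delta.
apply: eq_bigr => x _; rewrite ucoefZ ucoef_wvec eq_sym.
case: (x == a); rewrite ?mul0r ?mulr0 // !mul1r.
by rewrite mulrAC divff ?mul1r ?sqrt_qd_neq0.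
Qed.

Lemma eps_t_idem (h : HC D) : eps_t (eps_t h) = eps_t h.
Proof.
rewrite (eps_t_span (eps_t h)); under eq_bigr do rewrite ucoef_eps_t.
by rewrite -eps_t_span.
Qed.

Lemma eps_t_ubas a : eps_t (ebas (ubas a a)) = sqrtC (d a) *: wvec D a.
Proof.
rewrite eps_t_span (big_only1 a) // => [|x ne _]; rewrite ucoef_ebas epsB_ubas /ltop /=.
  by rewrite eqxx !mulr1.
by rewrite eq_sym (negPf ne) mul0r mulr0 scale0r.
Qed.

Lemma eps_t_Ht z : z \in Ht D -> eps_t z = z.
Proof.
move=> zH; have /fixedSpaceP : z \in fixedSpace (linfun (@eps_t C D)).
  apply: subvP zH; apply/span_subvP => _ /mapP[β _ ->].
  by apply/fixedSpaceP; rewrite lfunE /= eps_t_idem.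
by rewrite lfunE.
Qed.

Lemma Ht_span : Ht D = <<[seq wvec D a | a <- enum L]>>%VS.
Proof.
apply/eqP; rewrite eqEsubv; apply/andP; split; apply/span_subvP => _ /mapP[x _ ->].
  rewrite eps_t_span; apply: memv_suml => a _.
  by apply/memvZ/memv_span/map_f; rewrite mem_enum.
have <- : (sqrtC (d x))^-1 *: eps_t (ebas (ubas x x)) = wvec D x.
  by rewrite eps_t_ubas scalerA mulVf ?scale1r ?sqrt_qd_neq0.
by apply/memvZ/memv_span/map_f; rewrite mem_enum.
Qed.

Lemma Ht_ucoef_eq0 z : z \in Ht D -> (forall a, ucoef a z = 0) -> z = 0.
Proof.
move=> zH z0; rewrite -(eps_t_Ht zH) eps_t_span.
by apply: big1 => a _; rewrite z0 mulr0 scale0r.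
Qed.

Lemma wvec_neq0 a : wvec D a != 0.
Proof.
apply/eqP => w0; have := ucoef_wvec a a; rewrite w0 eqxx mul1r.
rewrite /ucoef big1 => [/esym/eqP|β _]; last by rewrite ffunE mulr0.
by rewrite invr_eq0 (negPf (sqrt_qd_neq0 a)).
Qed.

Lemma Ht_neq0 : Ht D != 0%VS.
Proof.
apply: contraNneq (wvec_neq0 one) => Ht0.
by rewrite -memv0 -Ht0 Ht_span memv_span // map_f // mem_enum.
Qed.

Lemma Vbasis_one_val (γ : Vbasis one) : val γ = ((val γ).1, (val γ).1).
Proof. by case: γ => [[y z] /=]; rewrite N_unit // => /eqP->. Qed.

Lemma N_one_diag a : N one a a.
Proof. by rewrite N_unit. Qed.

Definition vdiag a : Vbasis one := exist _ (a, a) (N_one_diag a).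

Lemma vdiag_val γ : vdiag (val γ).1 = γ.
Proof. by apply: val_inj; rewrite [RHS]Vbasis_one_val. Qed.

Lemma eq_vdiag γ c : (γ == vdiag c) = ((val γ).1 == c).
Proof. by rewrite -(inj_eq val_inj) [val γ in LHS]Vbasis_one_val xpair_eqE andbb. Qed.

Lemma actB_one β (γ' γ : Vbasis one) :
  actB β γ' γ = epsB β * ((ltop β == (val γ).1) && (rtop β == (val γ').1))%:R.
Proof.
case: β => [[[[[a b] j] c] dd] adm].
rewrite /actB /epsB /ltop /rtop (Vbasis_one_val γ') /=; move: (val γ').1 => p.
move: adm; case: ifP => [/and3P[/eqP-> /eqP-> /eqP->] | ncond _]; rewrite ffunE.
  rewrite /adm5 N_unitr // => /andP[/eqP<- _].
  rewrite (Vbasis_one_val γ) qd_one // sqrtC1 divr1 !eqxx xpair_eqE andbb !andbT mul1r.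
  by rewrite eq_sym.
case: (eqVneq j one) ncond => [_|_ _]; last by rewrite andbF mul0r.
case: (eqVneq c p) => [-> ncond|_ _]; last by rewrite andbF mulr0.
by case: (eqVneq p dd) ncond => [|_ _]; rewrite ?andbF ?mul0r.
Qed.

Lemma toV1_eps_t h : toV1 (eps_t h) = toV1 h.
Proof. by apply/ffunP => γ; rewrite !ffunE ucoef_eps_t. Qed.

Lemma toV1_mulH h z : toV1 (mulH h z) = actV D one h (toV1 z).
Proof.
apply/ffunP => γ; rewrite ffunE ucoef_mulH sum_ffunE big_mkcond; apply: eq_bigr => β _.
rewrite sum_ffunE.
transitivity (\sum_γ' (γ' == vdiag (rtop β))%:R *
                 ((ltop β == (val γ).1)%:R * epsB β * h β * toV1 z γ')).
  by rewrite sum_delta ffunE; case: eqP; rewrite ?mul1r ?mul0r.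
apply: eq_bigr => γ' _; rewrite !ffunE regular_scaleE actB_one.
rewrite eq_vdiag [rtop β == _]eq_sym.
case: (ltop β == (val γ).1); case: ((val γ').1 == rtop β);
  rewrite ?mul0r ?mulr0 // !mul1r mulr1.
by rewrite [RHS]mulrC mulrA.
Qed.

Lemma toV1_act_t h z : toV1 (act_t D h z) = actV D one h (toV1 z).
Proof. by rewrite /act_t toV1_eps_t toV1_mulH. Qed.

Lemma limg_toV1_Ht : (linfun toV1 @: Ht D)%VS = fullv.
Proof.
apply/eqP; rewrite eqEsubv subvf; apply/subvP => v _.
have -> : v = \sum_a v (vdiag a) *: linfun toV1 (eps_t (ebas (ubas a a))).
  apply/ffunP => γ; rewrite sum_ffunE -[LHS](congr1 v (vdiag_val γ)).
  transitivity (\sum_a (a == (val γ).1)%:R * v (vdiag a)); first by rewrite sum_delta.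
  apply: eq_bigr => a _; rewrite ffunE lfunE /= toV1_eps_t ffunE ucoef_ebas epsB_ubas.
  by rewrite /ltop /= regular_scaleE mulr1 mulrC.
apply: memv_suml => a _; apply/memvZ/memv_img/memv_span/map_f.
by rewrite mem_enum.
Qed.

Lemma lker_toV1_Ht : (lker (linfun toV1) :&: Ht D)%VS = 0%VS.
Proof.
apply/eqP; rewrite -subv0; apply/subvP => z.
rewrite memv_cap memv_ker memv0 lfunE /= => /andP[/eqP z0 zH].
apply/eqP/(Ht_ucoef_eq0 zH) => a.
by have := congr1 (fun v : Vmod D one => v (vdiag a)) z0; rewrite !ffunE.
Qed.

Lemma act_t_ubas x a z :
  act_t D (ebas (ubas x a)) z = (sqrtC (d x) * ucoef a z) *: wvec D x.
Proof.
rewrite /act_t eps_t_span (big_only1 x) // => [|y ne _];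
  rewrite ucoef_mul_ebas epsB_ubas /ltop /rtop /=.
  by rewrite eqxx mulr1 mul1r.
by rewrite eq_sym (negPf ne) !mul0r mulr0 scale0r.
Qed.

Lemma Ht_simple U : (U <= Ht D)%VS ->
  (forall h z, z \in U -> act_t D h z \in U) -> U = 0%VS \/ U = Ht D.
Proof.
move=> sUH actU; have [->|U0] := eqVneq U 0%VS; [by left | right].
have zU := memv_pick U; have z0 : vpick U != 0 by rewrite vpick0.
have [a za] : exists a, ucoef a (vpick U) != 0.
  apply/existsP; apply: contraNT z0 => /existsPn za.
  by apply/eqP/(Ht_ucoef_eq0 (subvP sUH _ zU)) => a; apply/eqP/negbNE.
apply/eqP; rewrite eqEsubv sUH Ht_span; apply/span_subvP => _ /mapP[x _ ->].
have := memvZ (sqrtC (d x) * ucoef a (vpick U))^-1 (actU (ebas (ubas x a)) _ zU).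
by rewrite act_t_ubas scalerA mulVf ?scale1r // mulf_neq0 ?sqrt_qd_neq0.
Qed.

End QuantumGroupoid.

Theorem mainTheorem10 (C : numClosedFieldType) (D : fusion_data C) :
  UFC_axioms D ->
  [/\ Ht D = <<[seq wvec D a | a <- enum (lab D)]>>%VS,
      \dim (Ht D) = \dim (fullv : {vspace Vmod D (lone D)}),
      (exists phi : 'Hom(HC D, Vmod D (lone D)),
         [/\ (phi @: Ht D)%VS = fullv,
             (lker phi :&: Ht D)%VS = 0%VS &
             forall h z, z \in Ht D ->
               phi (act_t D h z) = actV D (lone D) h (phi z)]) &
      (Ht D != 0%VS /\
       forall U : {vspace HC D}, (U <= Ht D)%VS ->
         (forall h z, z \in U -> act_t D h z \in U) ->
         U = 0%VS \/ U = Ht D)].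
Proof.
move=> HD; split.
- exact: Ht_span.
- by rewrite -(limg_toV1_Ht HD) limg_dim_eq // capvC lker_toV1_Ht.
- exists (linfun (@toV1 C D)); split; [exact: limg_toV1_Ht | exact: lker_toV1_Ht |].
  by move=> h z _; rewrite !lfunE /= toV1_act_t.
- split; [exact: Ht_neq0 | exact: Ht_simple].
Qed.
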